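(* Let $R$ be a commutative unital ring and $E$ an $R$-module such that $\mathrm{Ass}_R(E)$ is compact in the flat topology of $\mathrm{Spec}(R)$. Suppose that $S$ is a multiplicatively closed subset of $R$ with $E_S=0$. Then there is some $a\in S$ such that $E_a=0$, i.e. $a\in\mathcal O_R(E)$.
   Context: $\mathrm{Ass}_R(E)$ (the weak assassinator) is the set of prime ideals $P$ of $R$ that are minimal among the prime ideals containing $0:_Rx$ for some $x\in E$. The flat topology on $\mathrm{Spec}(R)$ is the topology whose closed sets are the images of $\mathrm{Spec}(T)\to\mathrm{Spec}(R)$ for flat ring morphisms $R\to T$; the sets $\mathrm V(I)=\{P\mid I\subseteq P\}$ with $I$ a finitely generated ideal form a basis of its open sets. For $a\in R$, $E_a$ is the localization of $E$ at $\{a^n\mid n\in\mathbb N\}$, and $\mathcal O_R(E)=\{a\in R\mid E_a=0\}$. Compactness does not require Hausdorffness. *)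

From Stdlib Require Import List.
From HB Require Import structures.
From mathcomp Require Import all_boot all_order all_algebra.
Set Implicit Arguments. Unset Strict Implicit. Unset Printing Implicit Defensive.
Import GRing.Theory.
Local Open Scope ring_scope.

Section Defs.
Variable R : comPzRingType.

Definition subset_of {T : Type} (A B : T -> Prop) := forall x, A x -> B x.

Definition is_ideal (I : R -> Prop) :=
  [/\ I 0, (forall a b, I a -> I b -> I (a + b)) & (forall r a, I a -> I (r * a))].

Definition is_prime_ideal (P : R -> Prop) :=
  [/\ is_ideal P, ~ P 1 & (forall a b, P (a * b) -> P a \/ P b)].

Definition spec := {P : R -> Prop | is_prime_ideal P}.

Definition ideal_gen (s : seq R) : R -> Prop :=
  fun x => exists c : 'I_(size s) -> R, x = \sum_(i < size s) c i * s`_i.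

Definition V (I : R -> Prop) : spec -> Prop := fun P => subset_of I (sval P).

(* Flat topology: basic opens are V(I) with I finitely generated;
   open sets are unions of basic opens. *)
Definition flat_open (U : spec -> Prop) :=
  forall P, U P -> exists s : seq R, V (ideal_gen s) P /\ subset_of (V (ideal_gen s)) U.

Definition flat_compact (A : spec -> Prop) :=
  forall C : (spec -> Prop) -> Prop,
    (forall U, C U -> flat_open U) ->
    (forall P, A P -> exists U, C U /\ U P) ->
    exists s : seq (spec -> Prop),
      (forall U, List.In U s -> C U) /\
      (forall P, A P -> exists U, List.In U s /\ U P).

Variable E : lmodType R.

Definition ann (x : E) : R -> Prop := fun r => r *: x = 0.

(* weak assassinator Ass_R(E) *)
Definition Ass : spec -> Prop := fun P =>
  exists x : E, subset_of (ann x) (sval P) /\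
    forall Q : spec, subset_of (ann x) (sval Q) -> subset_of (sval Q) (sval P) ->
      subset_of (sval P) (sval Q).

Definition mult_closed (S : R -> Prop) :=
  S 1 /\ forall a b, S a -> S b -> S (a * b).

(* equality of fractions x/s = y/t in the localization E_S *)
Definition loc_eq (S : R -> Prop) (x : E) (s : R) (y : E) (t : R) :=
  exists u, S u /\ u *: (t *: x - s *: y) = 0.

Definition loc_zero (S : R -> Prop) :=
  forall (x : E) (s : R), S s -> loc_eq S x s 0 1.

Definition powers (a : R) : R -> Prop := fun r => exists n : nat, r = a ^+ n.

Definition O_R : R -> Prop := fun a => loc_zero (powers a).

End Defs.

From mathcomp Require Import all_boot all_order all_algebra.
From mathcomp Require Import boolp classical_sets ring.
Set Implicit Arguments.
Unset Strict Implicit.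
Unset Printing Implicit Defensive.

Import GRing.Theory.
Local Open Scope ring_scope.
Local Open Scope classical_set_scope.

(* Every x is killed by some u in S, and each prime of Ass(E) contains some
   0 :_R x, so the basic flat opens V(u), u in S, cover Ass(E).  By compactness
   finitely many suffice, and their product a lies in S and in every prime of
   Ass(E).  If some x were killed by no power of a, then 0 :_R x would lie in a
   prime avoiding a (Zorn), and a prime minimal over 0 :_R x below that one
   (Zorn again) would be a member of Ass(E) not containing a. *)

Lemma Zorn_nonempty_chains (T : Type) (R : T -> T -> Prop) (t0 : T) :
  (forall t, R t t) -> (forall r s t, R r s -> R s t -> R r t) ->
  (forall A : set T, A !=set0 -> total_on A R -> exists t, forall s, A s -> R s t) ->
  exists t, premaximal R t.
Proof.
move=> Rxx Rtr ub.
have [||| t tmax] := @ZL_preorder T t0 (fun s t => `[< R s t >]).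
- by move=> t; apply/asboolP.
- by move=> r s t /asboolP Rrs /asboolP Rst; apply/asboolP; apply: Rtr Rst.
- move=> A Atot; have [A0|/forallNP A0] := pselect (A !=set0).
  + have [|t At] := ub A A0.
      by move=> s t As At; case: (Atot s t As At) => /asboolP; [left|right].
    by exists t => s /At /asboolP.
  + by exists t0 => s /A0.
- by exists t => s /asboolP /tmax /asboolP.
Qed.

Section Ideals.
Variable R : comPzRingType.
Implicit Types (I J P Q : R -> Prop) (a b r : R).

Lemma ideal0 {I} : is_ideal I -> I 0.
Proof. by case. Qed.

Lemma idealD {I a b} : is_ideal I -> I a -> I b -> I (a + b).
Proof. by case=> _ + _; apply. Qed.

Lemma idealMl {I r a} : is_ideal I -> I a -> I (r * a).
Proof. by case=> _ _; apply. Qed.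

Lemma idealMr {I r a} : is_ideal I -> I a -> I (a * r).
Proof. by rewrite mulrC; apply: idealMl. Qed.

Lemma prime_idealW {P} : is_prime_ideal P -> is_ideal P.
Proof. by case. Qed.

Lemma ideal_chain_union (T : Type) (A : set T) (J : T -> R -> Prop) :
  A !=set0 -> total_on A (fun s t => subset_of (J s) (J t)) ->
  (forall t, A t -> is_ideal (J t)) -> is_ideal (fun r => exists2 t, A t & J t r).
Proof.
move=> [t0 At0] Atot Aideal; split.
- by exists t0 => //; exact: ideal0 (Aideal t0 At0).
- move=> a b [s As Jsa] [t At Jtb].
  case: (Atot s t As At) => [Jst|Jts].
  + by exists t => //; apply: idealD (Aideal t At) (Jst a Jsa) Jtb.
  + by exists s => //; apply: idealD (Aideal s As) Jsa (Jts b Jtb).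
- by move=> r a [t At Jta]; exists t => //; apply: idealMl (Aideal t At) Jta.
Qed.

Lemma prime_chain_meet (T : Type) (A : set T) (P : T -> R -> Prop) :
  A !=set0 -> total_on A (fun s t => subset_of (P s) (P t)) ->
  (forall t, A t -> is_prime_ideal (P t)) ->
  is_prime_ideal (fun r => forall t, A t -> P t r).
Proof.
move=> [t0 At0] Atot Aprime; split; [split| |].
- by move=> t /Aprime/prime_idealW/ideal0.
- move=> a b Pa Pb t At.
  exact: idealD (prime_idealW (Aprime t At)) (Pa t At) (Pb t At).
- by move=> r a Pa t At; exact: idealMl (prime_idealW (Aprime t At)) (Pa t At).
- by move=> P1; have [_ + _] := Aprime t0 At0; apply; apply: P1.
- move=> a b Pab; apply: contrapT => /not_orP[/existsNP[s /not_implyP[As Psa]]].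
  move=> /existsNP[t /not_implyP[At Ptb]].
  have [_ _ Ps] := Aprime s As; have [_ _ Pt] := Aprime t At.
  case: (Atot s t As At) => [Pst|Pts].
  + by case: (Ps a b (Pab s As)) => // /Pst.
  + by case: (Pt a b (Pab t At)) => // /Pts.
Qed.

Definition avoids_powers a J := forall n : nat, ~ J (a ^+ n).

Definition ideal_adjoin J b : R -> Prop := fun y => exists j r, J j /\ y = j + r * b.

Lemma ideal_adjoin_ideal {J} b : is_ideal J -> is_ideal (ideal_adjoin J b).
Proof.
move=> Jideal; split.
- by exists 0, 0; rewrite mul0r addr0; split=> //; apply: ideal0.
- move=> x y [j [r [Jj ->]]] [j' [r' [Jj' ->]]].
  exists (j + j'), (r + r'); split; first exact: idealD.
  by rewrite mulrDl addrACA.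
- move=> r x [j [r' [Jj ->]]]; exists (r * j), (r * r'); split; first exact: idealMl.
  by rewrite mulrDr mulrA.
Qed.

Lemma maximal_avoiding_powers_prime J a :
  is_ideal J -> avoids_powers a J ->
  (forall N, is_ideal N -> avoids_powers a N -> subset_of J N -> subset_of N J) ->
  is_prime_ideal J.
Proof.
move=> Jideal Ja Jmax.
have adjoin_power b : ~ J b -> exists n j r, J j /\ a ^+ n = j + r * b.
  move=> Jb; apply: contrapT => /forallNP noPower; apply: Jb.
  apply: (Jmax _ (ideal_adjoin_ideal b Jideal) _ _ b).
  - by move=> n [j [r [Jj e]]]; apply: (noPower n); exists j, r.
  - by move=> x Jx; exists x, 0; rewrite mul0r addr0.
  - by exists 0, 1; rewrite add0r mul1r; split=> //; apply: ideal0.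
split=> //; first by move=> J1; apply: (Ja 0%N); rewrite expr0.
move=> b c Jbc; apply: contrapT => /not_orP[/adjoin_power[n [j [r [Jj ebn]]]]].
move=> /adjoin_power[m [j' [r' [Jj' ecm]]]]; apply: (Ja (n + m)%N).
have -> : a ^+ (n + m) = a ^+ m * j + b * r * j' + r * r' * (b * c).
  by rewrite exprD ebn ecm; ring.
by apply: (idealD Jideal); [apply: (idealD Jideal)|]; apply: (idealMl Jideal).
Qed.

Lemma exists_prime_avoiding_powers I a :
  is_ideal I -> avoids_powers a I ->
  exists P, [/\ is_prime_ideal P, subset_of I P & ~ P a].
Proof.
move=> Iideal Ia.
pose T := {J | [/\ is_ideal J, subset_of I J & avoids_powers a J]}.
have [||| [J [Jideal IJ Ja]] Jmax] := @Zorn_nonempty_chains T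
    (fun X Y => subset_of (sval X) (sval Y)) (exist _ I (And3 Iideal (fun _ => id) Ia)).
- by move=> J x.
- by move=> J N M JN NM x /JN /NM.
- move=> A [J0 AJ0] Atot.
  pose U r := exists2 X, A X & sval X r.
  have Ugood : [/\ is_ideal U, subset_of I U & avoids_powers a U].
    split.
    + apply: ideal_chain_union => //; first by exists J0.
      by move=> J _; case: (svalP J).
    + by move=> x Ix; exists J0 => //; case: (svalP J0) => _ /(_ x Ix).
    + by move=> n [J _]; case: (svalP J) => _ _ /(_ n).
  by exists (exist _ U Ugood) => J AJ x Jx; exists J.
- exists J; split=> //; last by move=> Ja1; apply: (Ja 1%N); rewrite expr1.
  apply: maximal_avoiding_powers_prime => // N Nideal Na JN.
  have IN : subset_of I N by move=> x /IJ /JN.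
  exact: (Jmax (exist _ N (And3 Nideal IN Na)) JN).
Qed.

Definition minimal_prime_over I Q := [/\ is_prime_ideal Q, subset_of I Q &
  forall Q', is_prime_ideal Q' -> subset_of I Q' -> subset_of Q' Q -> subset_of Q Q'].

Lemma exists_minimal_prime_below I P :
  is_prime_ideal P -> subset_of I P ->
  exists2 Q, minimal_prime_over I Q & subset_of Q P.
Proof.
move=> Pprime IP.
pose T := {Q | [/\ is_prime_ideal Q, subset_of I Q & subset_of Q P]}.
have [||| [Q [Qprime IQ QP]] Qmin] := @Zorn_nonempty_chains T
    (fun X Y => subset_of (sval Y) (sval X)) (exist _ P (And3 Pprime IP (fun _ => id))).
- by move=> Q x.
- by move=> Q1 Q2 Q3 Q12 Q23 x /Q23 /Q12.
- move=> A [Q0 AQ0] Atot.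
  pose M r := forall X, A X -> sval X r.
  have Mgood : [/\ is_prime_ideal M, subset_of I M & subset_of M P].
    split.
    + apply: prime_chain_meet; first by exists Q0.
      * by move=> Q1 Q2 AQ1 AQ2; case: (Atot Q1 Q2 AQ1 AQ2); [right|left].
      * by move=> Q _; case: (svalP Q).
    + by move=> x Ix Q _; case: (svalP Q) => _ /(_ x Ix).
    + by move=> x Mx; case: (svalP Q0) => _ _; apply; apply: Mx.
  by exists (exist _ M Mgood) => Q AQ x Mx; apply: Mx.
- exists Q => //; split=> // Q' Q'prime IQ' Q'Q.
  exact: (Qmin (exist _ Q' (And3 Q'prime IQ' (fun x Q'x => QP x (Q'Q x Q'x)))) Q'Q).
Qed.

End Ideals.

Section PrincipalOpens.
Variable R : comPzRingType.

Lemma V_principal (u : R) (P : spec R) : V (ideal_gen [:: u]) P <-> sval P u.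
Proof.
have Pideal := prime_idealW (svalP P); split.
- by apply; exists (fun _ => 1); rewrite big_ord1 mul1r.
- by move=> Pu y [c ->]; rewrite big_ord1; apply: idealMl.
Qed.

Lemma flat_open_V (s : seq R) : flat_open (V (ideal_gen s)).
Proof. by move=> P VP; exists s; split. Qed.

Lemma mult_closed_meet_principal_cover (S : R -> Prop) (s : seq (spec R -> Prop)) :
  mult_closed S ->
  (forall U, List.In U s -> exists2 u, S u & U = V (ideal_gen [:: u])) ->
  exists2 a, S a & forall P U, List.In U s -> U P -> sval P a.
Proof.
case=> S1 SM; elim: s => [|U s IHs] sS; first by exists 1.
have [a Sa aP] := IHs (fun U' sU' => sS U' (or_intror sU')).
have [u Su ->] := sS U (or_introl erefl).
exists (u * a); first exact: SM.
have Pideal (P : spec R) := prime_idealW (svalP P).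
move=> P U' [<- /V_principal Pu|sU' U'P]; first exact: idealMr.
exact: idealMl (Pideal P) (aP P U' sU' U'P).
Qed.

End PrincipalOpens.

Section Module.
Variables (R : comPzRingType) (E : lmodType R).

Lemma ann_ideal (x : E) : is_ideal (ann x).
Proof.
split; rewrite /ann.
- by rewrite scale0r.
- by move=> a b ax bx; rewrite scalerDl ax bx addr0.
- by move=> r a ax; rewrite -scalerA ax scaler0.
Qed.

Lemma Ass_of_minimal_prime (x : E) (P : spec R) :
  minimal_prime_over (ann x) (sval P) -> Ass E P.
Proof. by case=> _ annP Pmin; exists x; split=> // Q; apply: Pmin (svalP Q). Qed.

Lemma O_R_of_Ass_primes (a : R) : (forall P, Ass E P -> sval P a) -> O_R E a.
Proof.
move=> aAss x t _.
suff [n anx] : exists n : nat, a ^+ n *: x = 0.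
  by exists (a ^+ n); split; [exists n | rewrite scale1r scaler0 subr0].
apply: contrapT => /forallNP annx.
have [P [Pprime annP Pa]] := exists_prime_avoiding_powers (ann_ideal x) annx.
have [Q Qmin QP] := exists_minimal_prime_below Pprime annP.
have [Qprime _ _] := Qmin.
by apply/Pa/QP; apply: (aAss (exist _ Q Qprime)); apply: (@Ass_of_minimal_prime x).
Qed.

Lemma loc_zero_annihilated (S : R -> Prop) (x : E) :
  S 1 -> loc_zero E S -> exists2 u, S u & u *: x = 0.
Proof.
move=> S1 /(_ x 1 S1)[u [Su ux]].
by exists u; rewrite // scale1r scaler0 subr0 in ux.
Qed.

Lemma Ass_primes_meet_mult_closed (S : R -> Prop) :
  flat_compact (Ass E) -> mult_closed S -> loc_zero E S ->
  exists2 a, S a & forall P, Ass E P -> sval P a.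
Proof.
move=> AssCompact Smc Szero.
pose C U := exists2 u, S u & U = V (ideal_gen [:: u]).
have [||s [sC sCover]] := AssCompact C.
- by move=> U [u _ ->]; apply: flat_open_V.
- move=> P [x [annP _]].
  have [u Su ux] := loc_zero_annihilated x Smc.1 Szero.
  by exists (V (ideal_gen [:: u])); split; [exists u | apply/V_principal/annP].
have [a Sa aP] := mult_closed_meet_principal_cover Smc sC.
by exists a => // P /sCover[U [sU UP]]; apply: aP sU UP.
Qed.

End Module.

Theorem proposition2p10 (R : comPzRingType) (E : lmodType R) (S : R -> Prop) :
  flat_compact (Ass E) ->
  mult_closed S ->
  loc_zero E S ->
  exists a, S a /\ O_R E a.
Proof.
move=> AssCompact Smc Szero.
have [a Sa aAss] := Ass_primes_meet_mult_closed AssCompact Smc Szero.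
by exists a; split; last exact: O_R_of_Ass_primes.
Qed.
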